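(* (i) For all $n,k\in\mathbb N$, $\binom{n}{k}=l_{n,k}+2l_{n,k+1}$. (ii) For all $n\in\mathbb N$, the polynomial identity $x^n=(-1)^n+(x+1)\sum_{k=1}^nl_{n,k}(x-1)^{k-1}$ holds.
   Context: For $i,j\in\mathbb N$, $l_{i,j}=\sum_{k=0}^{i-j}\binom{\frac{i-1}{2}+y-k}{k}\binom{\frac{i-1}{2}+k-y}{i-j-k}$, where $\binom{z}{k}=\frac{z(z-1)\cdots(z-k+1)}{k!}$; this sum is a polynomial in the auxiliary variable $y$ which is constant in $y$, so $l_{i,j}$ is a well-defined number (e.g. its value at $y=0$). In particular $l_{i,j}=0$ for $j>i$ (empty sum). These numbers form a Pascal-like triangle starting with rows $1$; $-1,1$; $1,0,1$; $-1,1,1,1$; $1,0,2,2,1$. *)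

From mathcomp Require Import all_boot all_order all_algebra.
Set Implicit Arguments. Unset Strict Implicit. Unset Printing Implicit Defensive.
Import Order.TTheory GRing.Theory Num.Theory.
Local Open Scope ring_scope.

Definition gbinom (z : rat) (k : nat) : rat :=
  (\prod_(i < k) (z - i%:R)) / (k`!)%:R.

Definition lsum (i j : nat) (y : rat) : rat :=
  if (j <= i)%N then
    \sum_(k < (i - j).+1)
      gbinom ((i%:R - 1) / 2 + y - k%:R) k *
      gbinom ((i%:R - 1) / 2 + k%:R - y) (i - j - k)
  else 0.

(* l_{i,j}: the (y-independent) value, taken at y = 0. *)
Definition l (i j : nat) : rat := lsum i j 0.

From mathcomp Require Import all_boot all_order all_algebra.
From mathcomp Require Import ring zify.
Set Implicit Arguments. Unset Strict Implicit. Unset Printing Implicit Defensive.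
Import GRing.Theory Num.Theory.
Local Open Scope ring_scope.

(* Writing [a = (n - 1) / 2], we have [l n k = s(a, a, n - k)] for the
   two-parameter sum [s(A, B, N) = \sum_m binom(A - m, m) binom(B + m, N - m)].
   Part (i) follows from the identity [s(A, B, N + 1) + 2 s(A, B, N) =
   binom(A + B + 1, N + 1)], proved by induction on [N]: by Pascal's rule in [A]
   and in [B] the defect of the identity at [N + 1] is invariant under [A -> A + 1]
   and [B -> B + 1], and it is polynomial in each variable, hence constant, so it
   suffices to check it at the single point [(A, B) = (N + 1, 0)], where the sums
   collapse.  Part (ii) is the binomial expansion of [((X - 1) + 1)^n], regrouped
   with (i); its constant term is read off by evaluating at [X = -1]. *)

Lemma gbinom0 z : gbinom z 0 = 1.
Proof. by rewrite /gbinom big_ord0 fact0 divr1. Qed.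

Lemma gbinom1 z : gbinom z 1 = z.
Proof. by rewrite /gbinom big_ord1 divr1 subr0. Qed.

Lemma gbinom_recr z k : gbinom z k.+1 = gbinom z k * (z - k%:R) / k.+1%:R.
Proof.
rewrite /gbinom big_ord_recr /= factS natrM.
have k1_neq0 : (k.+1%:R : rat) != 0 by rewrite pnatr_eq0.
have fact_neq0 : ((k`!)%:R : rat) != 0 by rewrite pnatr_eq0 -lt0n fact_gt0.
by field; rewrite ?nat1r k1_neq0 fact_neq0.
Qed.

Lemma gbinomS z k : gbinom (z + 1) k.+1 = gbinom z k.+1 + gbinom z k.
Proof.
elim: k z => [|k IHk] z; first by rewrite !gbinom_recr !gbinom0; field.
rewrite gbinom_recr IHk [gbinom z k.+2]gbinom_recr [gbinom z k.+1]gbinom_recr.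
have k1_neq0 : (k.+1%:R : rat) != 0 by rewrite pnatr_eq0.
have k2_neq0 : (2 + k%:R : rat) != 0 by rewrite -natrD pnatr_eq0.
by field; rewrite ?nat1r k1_neq0 k2_neq0.
Qed.

Lemma gbinom_nat n k : gbinom n%:R k = 'C(n, k)%:R.
Proof.
elim: n k => [|n IHn] [|k]; rewrite ?gbinom0 ?bin0 //.
  by rewrite /gbinom big_ord_recl /= subr0 !mul0r bin0n.
by rewrite -natr1 gbinomS !IHn binS natrD.
Qed.

Lemma gbinomN1 k : gbinom (-1) k = (-1) ^+ k.
Proof.
elim: k => [|k IHk]; first by rewrite gbinom0.
rewrite gbinom_recr IHk exprS.
have k1_neq0 : (k.+1%:R : rat) != 0 by rewrite pnatr_eq0.
by field; rewrite ?nat1r k1_neq0.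
Qed.

Definition polyfun (R : comNzRingType) (f : R -> R) :=
  exists p : {poly R}, forall x, f x = p.[x].

Lemma polyfun_cst (R : comNzRingType) (c : R) : polyfun (fun _ => c).
Proof. by exists c%:P => x; rewrite hornerC. Qed.

Lemma polyfun_id (R : comNzRingType) : polyfun (fun x : R => x).
Proof. by exists 'X => x; rewrite hornerX. Qed.

Lemma polyfunD (R : comNzRingType) (f g : R -> R) :
  polyfun f -> polyfun g -> polyfun (fun x => f x + g x).
Proof. by move=> [p Hp] [q Hq]; exists (p + q) => x; rewrite hornerD Hp Hq. Qed.

Lemma polyfunN (R : comNzRingType) (f : R -> R) :
  polyfun f -> polyfun (fun x => - f x).
Proof. by move=> [p Hp]; exists (- p) => x; rewrite hornerN Hp. Qed.

Lemma polyfunM (R : comNzRingType) (f g : R -> R) :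
  polyfun f -> polyfun g -> polyfun (fun x => f x * g x).
Proof. by move=> [p Hp] [q Hq]; exists (p * q) => x; rewrite hornerM Hp Hq. Qed.

Lemma polyfun_sum (R : comNzRingType) n (F : nat -> R -> R) :
  (forall i, polyfun (F i)) -> polyfun (fun x => \sum_(i < n) F i x).
Proof.
move=> polyF; elim: n => [|n IHn].
  by exists 0 => x; rewrite big_ord0 horner0.
have [p Hp] := polyfunD IHn (polyF n).
by exists p => x; rewrite big_ord_recr -Hp.
Qed.

Lemma polyfun_prod (R : comNzRingType) n (F : nat -> R -> R) :
  (forall i, polyfun (F i)) -> polyfun (fun x => \prod_(i < n) F i x).
Proof.
move=> polyF; elim: n => [|n IHn].
  by exists 1 => x; rewrite big_ord0 hornerC.
have [p Hp] := polyfunM IHn (polyF n).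
by exists p => x; rewrite big_ord_recr -Hp.
Qed.

(* A nonzero polynomial cannot take the same value at the infinitely many
   points [y, y + 1, y + 2, ...]. *)
Lemma polyfun_periodic_const (R : numDomainType) (f : R -> R) :
  polyfun f -> (forall x, f (x + 1) = f x) -> forall x y, f x = f y.
Proof.
move=> [p Hp] f_periodic x y.
have f_shift k : f (y + k%:R) = f y.
  by elim: k => [|k IHk]; rewrite ?addr0 // -natr1 addrA f_periodic.
set q := p - (p.[y])%:P.
suff q0 : q = 0.
  apply: subr0_eq; have := congr1 (horner^~ x) q0.
  by rewrite /= /q hornerD hornerN hornerC horner0 -!Hp.
apply: contraTeq isT => q_neq0.
have := max_poly_roots (rs := [seq y + i%:R | i <- iota 0 (size q)]) q_neq0.
rewrite size_map size_iota ltnn; apply.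
  apply/allP => z /mapP [i _ ->].
  by rewrite /root /q hornerD hornerN hornerC -!Hp f_shift subrr.
rewrite map_inj_uniq ?iota_uniq // => i j /addrI /eqP.
by rewrite eqr_nat => /eqP.
Qed.

Lemma polyfun2_periodic_const (R : numDomainType) (f : R -> R -> R) :
  (forall y, polyfun (f^~ y)) -> (forall x, polyfun (f x)) ->
  (forall x y, f (x + 1) y = f x y) -> (forall x y, f x (y + 1) = f x y) ->
  forall x y x' y', f x y = f x' y'.
Proof.
move=> polyf1 polyf2 f_per1 f_per2 x y x' y'.
rewrite (polyfun_periodic_const (polyf1 y) (f_per1^~ y) x x').
exact: polyfun_periodic_const (polyf2 x') (f_per2 x') y y'.
Qed.

Lemma polyfun_gbinom (g : rat -> rat) k :
  polyfun g -> polyfun (fun x => gbinom (g x) k).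
Proof.
move=> polyg; rewrite /gbinom; apply: polyfunM; last exact: polyfun_cst.
apply: (@polyfun_prod _ k (fun i x => g x - i%:R)) => i.
exact: polyfunD polyg (polyfun_cst _).
Qed.

Definition bsum (A B : rat) (N : nat) : rat :=
  \sum_(m < N.+1) gbinom (A - m%:R) m * gbinom (B + m%:R) (N - m).

Lemma bsumSr A B N : bsum A (B + 1) N.+1 = bsum A B N.+1 + bsum A B N.
Proof.
rewrite /bsum big_ord_recr [X in _ = X + _]big_ord_recr /= subnn !gbinom0.
rewrite addrAC -big_split /=; congr (_ + _); apply: eq_bigr => i _.
rewrite subSn; last by rewrite -ltnS.
by rewrite (addrAC B 1) gbinomS mulrDr.
Qed.

Lemma bsumSl A B N : bsum (A + 1) B N.+1 = bsum A B N.+1 + bsum (A - 1) (B + 1) N.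
Proof.
rewrite /bsum big_ord_recl [X in _ = X + _]big_ord_recl /= !subr0 !gbinom0.
rewrite -addrA; congr (_ + _); rewrite -big_split /=; apply: eq_bigr => i _.
rewrite /bump /= !add1n subSS.
have -> : A + 1 - i.+1%:R = (A - i.+1%:R) + 1 by rewrite addrAC.
have -> : A - 1 - i%:R = A - i.+1%:R by rewrite -natr1; ring.
have -> : B + 1 + i%:R = B + i.+1%:R by rewrite -natr1; ring.
by rewrite gbinomS mulrDl.
Qed.

Lemma polyfun_bsum_l B N : polyfun (fun A => bsum A B N).
Proof.
apply: (@polyfun_sum _ _ (fun m A => gbinom (A - m%:R) m * gbinom (B + m%:R) (N - m))).
move=> m; apply: polyfunM (polyfun_cst _).
exact/polyfun_gbinom/polyfunD/polyfun_cst/polyfun_id.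
Qed.

Lemma polyfun_bsum_r A N : polyfun (fun B => bsum A B N).
Proof.
apply: (@polyfun_sum _ _ (fun m B => gbinom (A - m%:R) m * gbinom (B + m%:R) (N - m))).
move=> m; apply: polyfunM (polyfun_cst _) _.
exact/polyfun_gbinom/polyfunD/polyfun_cst/polyfun_id.
Qed.

Lemma bsum_base_top N : bsum N.+1%:R 0 N.+2 = (-1) ^+ N.
Proof.
rewrite /bsum big_ord_recr /= big1 ?add0r => [|i _].
  rewrite subnn gbinom0 mulr1 -[N.+2%:R]natr1 opprD addrA subrr add0r.
  by rewrite gbinomN1 !exprS !mulN1r opprK.
have i_le : (i <= N.+1)%N by rewrite -ltnS.
rewrite -natrB // add0r !gbinom_nat -natrM.
have [i_lt|i_ge] := ltnP i (N.+2 - i); first by rewrite [X in (_ * X)%N]bin_small ?muln0.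
by rewrite bin_small //; lia.
Qed.

Lemma sum_indicator_half N : \sum_(i < N.+2) ((N.+1 - i == i)%N%:R : rat) = (odd N)%:R.
Proof.
have N1E := odd_double_half N.+1; rewrite -addnn /= in N1E.
set h := (N.+1)./2 in N1E.
case: (boolP (odd N)) => [oddN|evenN]; last first.
  rewrite big1 // => i _; have -> : (N.+1 - i == i)%N = false by apply/eqP; lia.
  by [].
have h_lt : (h < N.+2)%N by lia.
rewrite (bigD1 (Ordinal h_lt)) //= big1 ?addr0 => [|i /eqP i_neq].
  by have -> : (N.+1 - h == h)%N by apply/eqP; lia.
have {}i_neq : nat_of_ord i != h by apply/eqP => e; apply: i_neq; exact: val_inj.
by have -> : (N.+1 - i == i)%N = false by apply/eqP; lia.
Qed.

Lemma bsum_base_diag N : bsum N.+1%:R 0 N.+1 = (odd N)%:R.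
Proof.
rewrite /bsum -sum_indicator_half; apply: eq_bigr => i _.
have i_le : (i <= N.+1)%N by rewrite -ltnS.
rewrite -natrB // add0r !gbinom_nat -natrM; congr _%:R.
case: (ltngtP (N.+1 - i) i) => [lt|gt|->]; last by rewrite binn.
  by rewrite bin_small.
by rewrite [X in (_ * X)%N]bin_small ?muln0.
Qed.

Lemma bsum_binom N A B : bsum A B N.+1 + 2 * bsum A B N = gbinom (A + B + 1) N.+1.
Proof.
elim: N A B => [|N IHN] A B.
  by rewrite /bsum !big_ord_recr !big_ord0 /= !subn0 !subnn !gbinom0 !gbinom1; ring.
pose defect x y := bsum x y N.+2 + 2 * bsum x y N.+1 - gbinom (x + y + 1) N.+2.
have defect_shift_l x y : defect (x + 1) y = defect x y.
  rewrite /defect !bsumSl (addrAC x 1) gbinomS.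
  have <- : x - 1 + (y + 1) + 1 = x + y + 1 by ring.
  by rewrite -IHN; ring.
have defect_shift_r x y : defect x (y + 1) = defect x y.
  rewrite /defect !bsumSr addrA gbinomS -IHN; ring.
have polyfun_defect_l y : polyfun (defect^~ y).
  apply: polyfunD (polyfunN _).
    exact: polyfunD (polyfun_bsum_l _ _) (polyfunM (polyfun_cst _) (polyfun_bsum_l _ _)).
  exact/polyfun_gbinom/polyfunD/polyfun_cst/polyfunD/polyfun_cst/polyfun_id.
have polyfun_defect_r x : polyfun (defect x).
  apply: polyfunD (polyfunN _).
    exact: polyfunD (polyfun_bsum_r _ _) (polyfunM (polyfun_cst _) (polyfun_bsum_r _ _)).
  exact/polyfun_gbinom/polyfunD/polyfun_cst/polyfunD/polyfun_id/polyfun_cst.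
have defect_base : defect N.+1%:R 0 = 0.
  rewrite /defect bsum_base_top bsum_base_diag addr0 natr1 gbinom_nat binn.
  by rewrite -signr_odd; case: (odd N) => /=; rewrite ?expr1 ?expr0; ring.
have := polyfun2_periodic_const polyfun_defect_l polyfun_defect_r
  defect_shift_l defect_shift_r A B N.+1%:R 0.
by rewrite defect_base => /subr0_eq.
Qed.

Lemma l_bsum n k : (k <= n)%N ->
  l n k = bsum ((n%:R - 1) / 2) ((n%:R - 1) / 2) (n - k).
Proof.
by move=> le_kn; rewrite /l /lsum le_kn; apply: eq_bigr => i _; rewrite addr0 subr0.
Qed.

Lemma l_eq0 n k : (n < k)%N -> l n k = 0.
Proof. by move=> lt_nk; rewrite /l /lsum leqNgt lt_nk. Qed.

Lemma binom_l n k : 'C(n, k)%:R = l n k + 2 * l n k.+1.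
Proof.
have [lt_kn|lt_nk|->] := ltngtP k n.
- have n_sub_k : (n - k = (n - k.+1).+1)%N by rewrite subnSK.
  rewrite (l_bsum (ltnW lt_kn)) (l_bsum lt_kn) n_sub_k bsum_binom.
  have -> : (n%:R - 1) / 2 + (n%:R - 1) / 2 + 1 = (n%:R : rat) by field.
  by rewrite gbinom_nat -n_sub_k bin_sub // ltnW.
- by rewrite !l_eq0 ?bin_small ?mulr0 ?addr0 // ltnW.
- rewrite (l_bsum (leqnn n)) subnn l_eq0 // binn mulr0 addr0.
  by rewrite /bsum big_ord1 !gbinom0 mulr1.
Qed.

Lemma exprX_decomp (R : comNzRingType) n (c : nat -> R) :
  (forall k, c k + 2 * c k.+1 = 'C(n, k)%:R) -> c n.+1 = 0 ->
  'X^n = ((-1) ^+ n)%:P +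
         ('X + 1) * \sum_(1 <= k < n.+1) (c k)%:P * ('X - 1) ^+ (k - 1).
Proof.
move=> c_binom c_last; set s := \sum_(1 <= k < n.+1) _.
have decomp : 'X^n = (c 0%N)%:P + ('X + 1) * s.
  rewrite /s big_add1 /= big_mkord; set t := 'X - 1.
  rewrite -['X](subrK 1) -/t exprD1n.
  have -> : \sum_(i < n.+1) t ^+ i *+ 'C(n, i) =
      \sum_(i < n.+1) (c i)%:P * t ^+ i + \sum_(i < n.+1) (2 * c i.+1)%:P * t ^+ i.
    rewrite -big_split /=; apply: eq_bigr => i _.
    by rewrite -mulrDl -polyCD c_binom polyC_natr mulr_natl.
  rewrite big_ord_recl big_ord_recr /= c_last mulr0 polyC0 mul0r addr0 expr0 mulr1.
  rewrite -addrA; congr (_ + _).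
  rewrite -addrA mulrDl !big_distrr /= -!big_split /=; apply: eq_bigr => i _.
  by rewrite subn1 /bump /= add1n exprS polyCM polyC_natr; ring.
have c0 : c 0%N = (-1) ^+ n.
  have := congr1 (horner^~ (-1)) decomp.
  by rewrite /= hornerXn hornerD hornerC hornerM hornerD hornerX hornerC addNr mul0r addr0.
by rewrite decomp c0.
Qed.

Theorem proposition4p7 :
  (forall n k : nat, ('C(n, k))%:R = l n k + 2 * l n k.+1) /\
  (forall n : nat,
     ('X^n : {poly rat}) =
       ((-1) ^+ n)%:P +
       ('X + 1) * \sum_(1 <= k < n.+1) (l n k)%:P * ('X - 1) ^+ (k - 1)).
Proof.
split=> [|n]; first exact: binom_l.
exact: exprX_decomp (fun k => esym (binom_l n k)) (l_eq0 (ltnSn n)).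
Qed.
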